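(* Let $P,Q,R,S$ be the four vertices of a hinge (faces $PQS$ and $RQS$ sharing the diagonal $QS$), with radii $p,q,r,s>0$ at $P,Q,R,S$ and inversive distances $a,b,c,d,e>1$ on the edges $PQ,QR,RS,SP,QS$ respectively. Define the lengths $PQ=\sqrt{p^2+q^2+2apq}$, $QR=\sqrt{q^2+r^2+2bqr}$, $RS=\sqrt{r^2+s^2+2crs}$, $SP=\sqrt{s^2+p^2+2dsp}$, $QS=\sqrt{q^2+s^2+2eqs}$. Let $\Delta_{xyz}=x^2+y^2+z^2+2xyz-1$ and \[f=\frac{ab+cd+ace+bde+\sqrt{\Delta_{ade}}\sqrt{\Delta_{bce}}}{e^2-1}.\] Suppose \[\frac{\sqrt{\Delta_{bce}}}{p}+\frac{\sqrt{\Delta_{ade}}}{r}\le\frac{\sqrt{\Delta_{cdf}}}{q}+\frac{\sqrt{\Delta_{abf}}}{s}.\] If $QR<QS+SR$ and $SR<QS+QR$, then $PQ+PS>QS$. *)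

From Stdlib Require Import Reals.
Open Scope R_scope.

Definition Dlt (x y z : R) : R := x^2 + y^2 + z^2 + 2*x*y*z - 1.

Definition edge_len (x y i : R) : R := sqrt (x^2 + y^2 + 2*i*x*y).

Definition fval (a b c d e : R) : R :=
  (a*b + c*d + a*c*e + b*d*e + sqrt (Dlt a d e) * sqrt (Dlt b c e)) / (e^2 - 1).

From Stdlib Require Import Reals Lra Psatz.
Open Scope R_scope.

(* Consider a triangle with vertex radii x, q, s, inversive distances a (x–q),
   d (x–s), e (q–s) and edge lengths A, B, W opposite s, q, x.  Then
   W^2 = A^2 + B^2 + 2 L and (e^2 - 1)(A^2 B^2 - L^2) = Δ_ade x^2 W^2 - T^2,
   where L = e q s - x^2 - a x q - d x s and T is affine in x.  Hence the
   triangle inequalities at the vertex x amount to |T| < √Δ_ade x W, and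
   L >= 0 alone already forces T > -√Δ_ade x W.  The values of √Δ_cdf and
   √Δ_abf in closed form turn the hypothesis into
   √Δ_bce r T_P + √Δ_ade p T_R <= 0; the triangle inequalities at R give
   T_R > -√Δ_bce r W, hence T_P < √Δ_ade p W, i.e. QS < PQ + PS. *)

Lemma Dlt_pos x y z : 1 < x -> 1 < y -> 1 < z -> 0 < Dlt x y z.
Proof.
  intros; unfold Dlt.
  assert (0 < x*y) by nra.
  assert (0 < x*y*z) by nra.
  nra.
Qed.

Lemma Dlt_swap x y z : Dlt x y z = Dlt y x z.
Proof. unfold Dlt; ring. Qed.

Lemma edge_len_sym x y i : edge_len x y i = edge_len y x i.
Proof. unfold edge_len; f_equal; ring. Qed.

Lemma sqr_edge_len x y i : 0 < x -> 0 < y -> 0 < i ->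
  edge_len x y i ^ 2 = x^2 + y^2 + 2*i*x*y.
Proof.
  intros; unfold edge_len; apply pow2_sqrt.
  assert (0 < i*x*y) by (apply Rmult_lt_0_compat; nra).
  nra.
Qed.

Lemma sqr_lt_iff (u v : R) : 0 <= v -> u^2 < v^2 <-> - v < u < v.
Proof. intros; split; [intros | intros []]; nra. Qed.

Lemma triangle_ineq_of_lt_mul (A B W L : R) : 0 <= A -> 0 <= B -> 0 <= W ->
  W^2 = A^2 + B^2 + 2*L -> L < A*B -> W < A + B.
Proof. intros; nra. Qed.

Lemma gt_neg_mul_of_triangle_ineq (A B W L : R) : 0 <= A -> 0 <= B -> 0 <= W ->
  W^2 = A^2 + B^2 + 2*L -> A < W + B -> B < W + A -> - (A*B) < L.
Proof. intros; nra. Qed.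

Lemma pos_root_quadratic (m c : R) : 0 <= m -> 0 < c ->
  exists t0, 0 < t0 /\ t0^2 + m*t0 = c /\
             forall t, 0 <= t -> t^2 + m*t <= c -> t <= t0.
Proof.
  intros Hm Hc.
  set (sg := sqrt (m^2 + 4*c)).
  assert (Hsg : sg^2 = m^2 + 4*c) by (apply pow2_sqrt; nra).
  assert (0 <= sg) by apply sqrt_pos.
  exists ((sg - m)/2); repeat split.
  - nra.
  - field_simplify; rewrite Hsg; field.
  - intros t Ht Htc.
    destruct (Rle_or_lt t ((sg - m)/2)) as [|Hlt]; [assumption|].
    nra.
Qed.

(* L = -A B cos(angle at x). *)
Definition law_cos_term (x q s a d e : R) : R := e*q*s - x^2 - a*x*q - d*x*s.

Definition tri_form (x q s a d e : R) : R :=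
  (e^2 - 1)*q*s - (a + d*e)*x*s - (d + a*e)*x*q.

Section VertexTriangle.

Variables q s a d e : R.
Hypotheses (hq : 0 < q) (hs : 0 < s) (ha : 1 < a) (hd : 1 < d) (he : 1 < e).

Local Notation A t := (edge_len t q a).
Local Notation B t := (edge_len t s d).
Local Notation W := (edge_len q s e).
Local Notation L t := (law_cos_term t q s a d e).
Local Notation T t := (tri_form t q s a d e).
Local Notation X := (sqrt (Dlt a d e)).

Let X_ge0 : 0 <= X. Proof. apply sqrt_pos. Qed.
Let W_ge0 : 0 <= W. Proof. apply sqrt_pos. Qed.
Let A_ge0 t : 0 <= A t. Proof. apply sqrt_pos. Qed.
Let B_ge0 t : 0 <= B t. Proof. apply sqrt_pos. Qed.

Lemma law_of_cosines t : 0 < t -> W^2 = A t ^2 + B t ^2 + 2 * L t.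
Proof.
  intros; unfold law_cos_term.
  rewrite !sqr_edge_len; lra.
Qed.

Lemma gram_identity t : 0 < t ->
  (e^2 - 1) * ((A t * B t)^2 - L t ^2) = (X*t*W)^2 - T t ^2.
Proof.
  intros; rewrite !Rpow_mult_distr.
  unfold law_cos_term, tri_form.
  rewrite !sqr_edge_len, pow2_sqrt by (lra || (left; apply Dlt_pos; lra)).
  unfold Dlt; ring.
Qed.

Lemma sqr_law_cos_lt_iff t : 0 < t ->
  L t ^2 < (A t * B t)^2 <-> T t ^2 < (X*t*W)^2.
Proof.
  intros Ht; pose proof (gram_identity t Ht).
  assert (0 < e^2 - 1) by nra.
  split; intros; nra.
Qed.

(* T t + X t W is affine in t and positive both at t = 0 and at the positive
   root t0 of L, where A B > 0 = |L|; L t >= 0 confines t to [0, t0]. *)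
Lemma tri_form_gt_of_law_cos_ge0 t : 0 < t -> 0 <= L t -> - (X*t*W) < T t.
Proof.
  intros Ht HL.
  assert (Hqs : 0 < q*s) by nra.
  destruct (pos_root_quadratic (a*q + d*s) (e*q*s)) as (t0 & Ht0 & Hroot & Hmax);
    [nra | nra |].
  assert (Htt0 : t <= t0).
  { apply Hmax; [lra|]. unfold law_cos_term in HL; nra. }
  assert (HLt0 : L t0 = 0) by (unfold law_cos_term; nra).
  assert (HT0 : - (X*t0*W) < T t0).
  { apply (sqr_lt_iff (T t0) (X*t0*W)).
    - apply Rmult_le_pos; [apply Rmult_le_pos|]; lra.
    - apply sqr_law_cos_lt_iff; [lra|]. rewrite HLt0.
      assert (0 < A t0 * B t0); [|nra].
      unfold edge_len; apply Rmult_lt_0_compat; apply sqrt_lt_R0;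
        assert (0 < t0 * q) by nra; assert (0 < t0 * s) by nra; nra. }
  assert (0 < e^2 - 1) by nra.
  assert (0 < (e^2 - 1)*q*s) by (apply Rmult_lt_0_compat; nra).
  set (K := (a + d*e)*s + (d + a*e)*q - X*W).
  assert (Haff : forall u, T u + X*u*W = (e^2 - 1)*q*s - u*K)
    by (intros; unfold tri_form, K; ring).
  pose proof (Haff t); pose proof (Haff t0).
  clearbody K; destruct (Rle_or_lt K 0); nra.
Qed.

Lemma triangle_ineq_of_tri_form_lt t : 0 < t -> T t < X*t*W -> W < A t + B t.
Proof.
  intros Ht HT.
  apply (triangle_ineq_of_lt_mul _ _ _ (L t)); auto using law_of_cosines.
  destruct (Rlt_or_le (L t) 0) as [HL|HL].
  - pose proof (Rmult_le_pos _ _ (A_ge0 t) (B_ge0 t)); lra.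
  - pose proof (tri_form_gt_of_law_cos_ge0 t Ht HL).
    assert (Hsq : L t ^2 < (A t * B t)^2).
    { apply sqr_law_cos_lt_iff; [lra|].
      apply sqr_lt_iff; [|lra].
      apply Rmult_le_pos; [apply Rmult_le_pos|]; lra. }
    pose proof (Rmult_le_pos _ _ (A_ge0 t) (B_ge0 t)); nra.
Qed.

Lemma tri_form_gt_of_triangle_ineq t : 0 < t ->
  A t < W + B t -> B t < W + A t -> - (X*t*W) < T t.
Proof.
  intros Ht HA HB.
  destruct (Rle_or_lt 0 (L t)) as [HL|HL].
  - exact (tri_form_gt_of_law_cos_ge0 t Ht HL).
  - pose proof (gt_neg_mul_of_triangle_ineq _ _ _ _ (A_ge0 t) (B_ge0 t) W_ge0
                  (law_of_cosines t Ht) HA HB).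
    assert (Hsq : T t ^2 < (X*t*W)^2).
    { apply sqr_law_cos_lt_iff; [lra|].
      pose proof (Rmult_le_pos _ _ (A_ge0 t) (B_ge0 t)); nra. }
    apply sqr_lt_iff in Hsq; [lra|].
    apply Rmult_le_pos; [apply Rmult_le_pos|]; lra.
Qed.

End VertexTriangle.

Lemma fval_swap a b c d e : fval d c b a e = fval a b c d e.
Proof. unfold fval; rewrite (Dlt_swap d a), (Dlt_swap c b); f_equal; ring. Qed.

Lemma Dlt_fval a b c d e : 1 < a -> 1 < b -> 1 < c -> 1 < d -> 1 < e ->
  Dlt c d (fval a b c d e)
  = ((sqrt (Dlt b c e) * (a + d*e) + sqrt (Dlt a d e) * (b + c*e)) / (e^2 - 1))^2.
Proof.
  intros Ha Hb Hc Hd He.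
  set (X := sqrt (Dlt a d e)); set (Y := sqrt (Dlt b c e)).
  assert (HX : X^2 = Dlt a d e) by (apply pow2_sqrt; left; apply Dlt_pos; lra).
  assert (HY : Y^2 = Dlt b c e) by (apply pow2_sqrt; left; apply Dlt_pos; lra).
  assert (Hk : 0 < e^2 - 1) by nra.
  assert (HF : fval a b c d e * (e^2 - 1) = a*b + c*d + a*c*e + b*d*e + X*Y)
    by (unfold fval; fold X Y; field; lra).
  assert (Hsq : Dlt c d (fval a b c d e) * (e^2 - 1)^2
                = (Y*(a + d*e) + X*(b + c*e))^2).
  { replace (Dlt c d (fval a b c d e) * (e^2 - 1)^2) with
      (c^2*(e^2 - 1)^2 + d^2*(e^2 - 1)^2 + (fval a b c d e * (e^2 - 1))^2
       + 2*c*d*(fval a b c d e * (e^2 - 1))*(e^2 - 1) - (e^2 - 1)^2)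
      by (unfold Dlt; ring).
    rewrite HF.
    transitivity ((Y*(a + d*e) + X*(b + c*e))^2
                  + (X^2 - (a + d*e)^2) * (Y^2 - Dlt b c e)
                  + (Dlt b c e - (b + c*e)^2) * (X^2 - Dlt a d e)).
    - unfold Dlt; ring.
    - rewrite HX, HY; ring. }
  apply (Rmult_eq_reg_r ((e^2 - 1)^2)); [|apply pow_nonzero; lra].
  rewrite Hsq; field; lra.
Qed.

Lemma sqrt_Dlt_fval_cd a b c d e : 1 < a -> 1 < b -> 1 < c -> 1 < d -> 1 < e ->
  sqrt (Dlt c d (fval a b c d e))
  = (sqrt (Dlt b c e) * (a + d*e) + sqrt (Dlt a d e) * (b + c*e)) / (e^2 - 1).
Proof.
  intros; rewrite Dlt_fval by assumption; apply sqrt_pow2.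
  apply Rle_mult_inv_pos; [|nra].
  apply Rplus_le_le_0_compat; apply Rmult_le_pos; try apply sqrt_pos; nra.
Qed.

Lemma sqrt_Dlt_fval_ab a b c d e : 1 < a -> 1 < b -> 1 < c -> 1 < d -> 1 < e ->
  sqrt (Dlt a b (fval a b c d e))
  = (sqrt (Dlt b c e) * (d + a*e) + sqrt (Dlt a d e) * (c + b*e)) / (e^2 - 1).
Proof.
  intros; rewrite <- fval_swap, (Dlt_swap a b), sqrt_Dlt_fval_cd by assumption.
  rewrite (Dlt_swap c b), (Dlt_swap d a); reflexivity.
Qed.

Lemma tri_form_combination_nonpos p q r s a b c d e X Y :
  0 < p -> 0 < q -> 0 < r -> 0 < s -> 1 < e ->
  Y / p + X / r <= (Y * (a + d*e) + X * (b + c*e)) / (e^2 - 1) / q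
                   + (Y * (d + a*e) + X * (c + b*e)) / (e^2 - 1) / s ->
  Y * r * tri_form p q s a d e + X * p * tri_form r q s b c e <= 0.
Proof.
  intros Hp Hq Hr Hs He Hineq.
  assert (Hk : 0 < e^2 - 1) by nra.
  assert (Hpos : 0 < p*q*r*s*(e^2 - 1))
    by (repeat apply Rmult_lt_0_compat; lra).
  apply Rmult_le_compat_r with (r := p*q*r*s*(e^2 - 1)) in Hineq; [|lra].
  replace (Y * r * tri_form p q s a d e + X * p * tri_form r q s b c e)
    with ((Y / p + X / r) * (p*q*r*s*(e^2 - 1))
          - ((Y * (a + d*e) + X * (b + c*e)) / (e^2 - 1) / q
             + (Y * (d + a*e) + X * (c + b*e)) / (e^2 - 1) / s)
            * (p*q*r*s*(e^2 - 1)))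
    by (unfold tri_form; field; lra).
  lra.
Qed.

Theorem lemma4p3 (p q r s a b c d e : R)
  (hp : 0 < p) (hq : 0 < q) (hr : 0 < r) (hs : 0 < s)
  (ha : 1 < a) (hb : 1 < b) (hc : 1 < c) (hd : 1 < d) (he : 1 < e)
  (hineq : sqrt (Dlt b c e) / p + sqrt (Dlt a d e) / r
           <= sqrt (Dlt c d (fval a b c d e)) / q
              + sqrt (Dlt a b (fval a b c d e)) / s)
  (hQR : edge_len q r b < edge_len q s e + edge_len r s c)
  (hSR : edge_len r s c < edge_len q s e + edge_len q r b) :
  edge_len p q a + edge_len s p d > edge_len q s e.
Proof.
  rewrite sqrt_Dlt_fval_cd, sqrt_Dlt_fval_ab in hineq by assumption.
  apply tri_form_combination_nonpos in hineq; [|assumption..].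
  rewrite (edge_len_sym q r b) in hQR, hSR.
  pose proof (tri_form_gt_of_triangle_ineq q s b c e hq hs hb hc he r hr hQR hSR)
    as HR.
  rewrite (edge_len_sym s p d).
  apply Rlt_gt, (triangle_ineq_of_tri_form_lt q s a d e hq hs ha hd he p hp).
  assert (0 < sqrt (Dlt a d e) * p)
    by (apply Rmult_lt_0_compat; [apply sqrt_lt_R0, Dlt_pos|]; lra).
  assert (0 < sqrt (Dlt b c e) * r)
    by (apply Rmult_lt_0_compat; [apply sqrt_lt_R0, Dlt_pos|]; lra).
  apply (Rmult_lt_reg_l (sqrt (Dlt b c e) * r)); nra.
Qed.
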